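(* Let $\theta,\theta'$ be real antisymmetric $n\times n$ matrices and $l\ge 1$. The map $\Sigma$, defined on elementary tensors $\Phi=a\otimes\phi_1\otimes\cdots\otimes\phi_l\in \mathrm{B}^l$ by $$\Sigma(\Phi)(a_1,\ldots,a_l)=a\cdot\sigma(\phi_1)(a_1)\cdots\sigma(\phi_l)(a_l)$$ (ordinary commutative product of polynomials, the result regarded as an element of $A_{\theta'}$), extended by linearity and then to the completion $\mathbf{B}^l$, is an isomorphism of complexes $\Sigma:\mathbf{B}^l\to C^l$, i.e. it is a linear bijection satisfying $d_l\Sigma=\Sigma\partial_l$.
   Context: For a real antisymmetric $n\times n$ matrix $\theta$, $A_\theta$ is the unital dg-algebra over $\mathbb{R}$ generated by $x^1,\dots,x^n$ (degree $0$) and $\xi^1,\dots,\xi^n$ (degree $1$) with relations $x^ix^j-x^jx^i=\theta^{ij}$, $x^i\xi^j=\xi^jx^i$, $\xi^i\xi^j=0$, and differential $dx^i=\xi^i$, $d\xi^i=0$. As a vector space (for every $\theta$) $A_\theta$ is identified with the space of polynomials $a=a_0(x)+a_i(x)\xi^i$ in commuting $x$'s that are at most linear in the $\xi$'s (summation over repeated indices). $A_\theta[1]$ denotes the degree shift ($A_\theta[1]_k=(A_\theta)_{k+1}$), and $B^l(A_\theta)=A_\theta[1]^{\otimes l}$ with the differential induced by $d$ (with Koszul signs). $C^l=\mathrm{Hom}(B^l(A_\theta),A_{\theta'}[1])$ is the graded space of all linear maps, with differential $d_l(f)=f\circ d$. Let $\mathrm{B}$ be the graded space of expressions $\phi=\phi^0(p)+\phi^i(p)\zeta_i$,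 where $\phi^0,\phi^i$ are formal power series in commuting variables $p_1,\dots,p_n$ of degree $0$ and $\zeta_i$ have degree $-1$; its differential is $\partial\phi=p_i\phi^i(p)$. Put $\mathrm{B}^l=A_\theta\otimes\mathrm{B}^{\otimes l}$, with $A_\theta$ regarded as a complex with zero differential, the degree of $a\otimes\phi_1\otimes\cdots\otimes\phi_l$ being $\deg\phi_1+\cdots+\deg\phi_l+\deg a+l-1$, and with $\partial_l$ the tensor-product differential. $\mathbf{B}^l$ is the completion of $\mathrm{B}^l$ with respect to the descending filtration by powers of the $p$'s. For $\phi\in\mathrm{B}$, $\sigma(\phi):A_\theta\to (A_\theta)_0$ sends $a=a_0(x)+a_j(x)\xi^j$ to $\phi^0(\partial_1,\dots,\partial_n)a_0(x)+\phi^j(\partial_1,\dots,\partial_n)a_j(x)$, where $\partial_i=\partial/\partial x^i$. *)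

From HB Require Import structures.
From mathcomp Require Import all_boot all_order all_algebra.
From Stdlib Require Rdefinitions.
From mathcomp Require Import Rstruct.
From mathcomp.multinomials Require Export mpoly.
Export Order.TTheory GRing.Theory.

Set Implicit Arguments.
Unset Strict Implicit.
Unset Printing Implicit Defensive.

Notation R := Rdefinitions.R.

Local Open Scope ring_scope.

Section Defs.
Variables (n l : nat).

Definition P := {mpoly R[n]}.

(* The underlying vector space of A_theta (the same for every theta):
   a = a_0(x) + a_i(x) xi^i  is encoded as the finite function
   a None = a_0,  a (Some i) = a_i  (coefficient of xi^i). *)
Definition A := {ffun option 'I_n -> P}.

Definition dA (a : A) : A :=
  [ffun o => if o is Some i then mderiv i (a None) else 0].

(* Koszul parity twist on A_theta[1]: a_0 has degree -1 (odd) in A[1],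
   a_i xi^i has degree 0 (even). *)
Definition twistA (a : A) : A :=
  [ffun o => if o is None then - a None else a o].

Definition mulAP (a : A) (q : P) : A := [ffun o => a o * q].

(* An element phi = phi^0(p) + phi^i(p) zeta_i of B: formal power series in
   p_1..p_n, encoded by coefficients: phi None beta = coefficient of p^beta in
   phi^0, phi (Some i) beta = coefficient of p^beta in phi^i. *)
Definition Bel := option 'I_n -> 'X_{1..n} -> R.

(* sigma(phi)(a) = phi^0(d) a_0 + phi^i(d) a_i ; the sum over beta is finite
   since d^beta a = 0 as soon as |beta| >= msize a (= 1 + total degree). *)
Definition sigma (phi : Bel) (a : A) : P :=
  \sum_(o : option 'I_n) \sum_(b : 'X_{1..n < msize (a o)})
     phi o b *: mderivm b (a o).

(* The completion bold-B^l of B^l = A_theta (x) B^{(x) l} w.r.t. the p-adic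
   filtration: B^{(x) l} has the basis-type decomposition given by a pattern
   s : 'I_l -> option 'I_n (factor j is the phi^0-part if s j = None, the
   zeta_i-part if s j = Some i) and a monomial p^(alpha j) in each factor;
   the completion is then the space of ALL families of coefficients in A,
   Phi = sum_(s, alpha) c s alpha (x) (p^(alpha 1) zeta_(s 1)) (x) ... *)
Definition Pat := {ffun 'I_l -> option 'I_n}.
Definition Mon := {ffun 'I_l -> 'X_{1..n}}.
Definition Bhat := Pat -> Mon -> A.

Definition elemB (a : A) (phis : 'I_l -> Bel) : Bhat :=
  fun s al => (\prod_(j < l) phis j (s j) (al j)) *: a.

Definition updP (s : Pat) (j : 'I_l) (o : option 'I_n) : Pat :=
  [ffun k => if k == j then o else s k].
Definition updM (al : Mon) (j : 'I_l) (m : 'X_{1..n}) : Mon :=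
  [ffun k => if k == j then m else al k].

(* Koszul sign for passing the differential through phi_1 .. phi_(j-1),
   each phi_k counted with degree deg phi_k + 1 (as in the degree formula
   deg phi_1 + ... + deg phi_l + deg a + l - 1): a phi^0-factor is odd, a
   zeta-factor is even. *)
Definition ksign (s : Pat) (j : 'I_l) : R :=
  \prod_(k < l | (k < j)%N) (if s k is None then -1 else 1).

(* The tensor-product differential partial_l (d phi = p_i phi^i, A has zero
   differential), written in coordinates on the completion. *)
Definition partial_l (c : Bhat) : Bhat :=
  fun s al =>
    \sum_(j < l | s j == None) \sum_(i < n)
       (if (U_(i) <= al j)%MM
        then ksign s j *: c (updP s j (Some i)) (updM al j (al j - U_(i))%MM)
        else 0).

(* C^l = Hom(A_theta[1]^{(x) l}, A_theta'[1]) realised as multilinear maps *)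
Definition Cl := {ffun 'I_l -> A} -> A.

Definition updA (xs : {ffun 'I_l -> A}) (j : 'I_l) (x : A) : {ffun 'I_l -> A} :=
  [ffun k => if k == j then x else xs k].

Definition multilinear (f : Cl) : Prop :=
  forall (xs : {ffun 'I_l -> A}) (j : 'I_l) (k : R) (x y : A),
    f (updA xs j (k *: x + y)) = k *: f (updA xs j x) + f (updA xs j y).

(* the differential of B^l(A_theta) (with Koszul signs) and d_l f = f o d *)
Definition d_l (f : Cl) : Cl :=
  fun xs => \sum_(j < l)
    f [ffun k : 'I_l => if (k < j)%N then twistA (xs k)
                 else if k == j then dA (xs k) else xs k].

(* Sigma on the completion: the (unique continuous) extension of
   a (x) phi_1 (x) ... (x) phi_l |-> (a_1..a_l |-> a sigma(phi_1)(a_1)...),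
   which for fixed arguments is a finite sum since d^alpha of a polynomial
   vanishes for |alpha| >= its msize. *)
Definition bound (xs : {ffun 'I_l -> A}) : nat :=
  (\max_(j < l) \max_(o : option 'I_n) msize (xs j o))%N.

Definition Sigma (c : Bhat) : Cl :=
  fun xs =>
    \sum_(s : Pat) \sum_(al : {ffun 'I_l -> 'X_{1..n < bound xs}})
      mulAP (c s [ffun j => bmnm (al j)])
            (\prod_(j < l) mderivm (bmnm (al j)) (xs j (s j))).

End Defs.

From HB Require Import structures.
From mathcomp Require Import all_boot all_order all_algebra.
From mathcomp Require Import Rstruct.
From mathcomp.multinomials Require Import mpoly.

Set Implicit Arguments.
Unset Strict Implicit.
Unset Printing Implicit Defensive.

Local Open Scope ring_scope.

(* Evaluating Sigma(c) on a tuple of monomials x^(be j) xi^(s j) gives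
   be! c(s, be) plus terms in the c(s, m) with m < be componentwise, since
   d^m x^b vanishes unless m <= b.  This triangular system makes Sigma
   injective and can be solved for c by recursion on the total degree of be;
   as a multilinear map is determined by its values on such tuples, Sigma is
   onto.  All sums are finite because d^m p = 0 as soon as |m| >= msize p.
   For d_l Sigma = Sigma partial_l, the term of partial_l moving p_i from the
   phi^0-part of the j-th factor to its zeta_i-part corresponds under sigma to
   d^(m + U_i) a_0 = d^m (d_i a_0), i.e. to the xi^i-component of d a; on both
   sides the Koszul sign is the product of the parities of the factors before
   the j-th one. *)

Lemma eq_big_uniq_vanishing (V : nmodType) (T : eqType) (s1 s2 : seq T)
    (F : T -> V) :
  uniq s1 -> uniq s2 ->
  (forall x, x \in s1 -> x \notin s2 -> F x = 0) ->
  (forall x, x \in s2 -> x \notin s1 -> F x = 0) ->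
  \sum_(x <- s1) F x = \sum_(x <- s2) F x.
Proof.
move=> uniq1 uniq2 F1 F2.
rewrite (bigID [in s2]) /= [X in _ + X]big1_seq ?addr0; last first.
  by move=> x /andP[x_out x_in]; apply: F1.
rewrite [RHS](bigID [in s1]) /= [X in _ + X]big1_seq ?addr0; last first.
  by move=> x /andP[x_out x_in]; apply: F2.
rewrite -[LHS]big_filter -[RHS]big_filter; apply/perm_big/uniq_perm.
- exact: filter_uniq.
- exact: filter_uniq.
- by move=> x; rewrite !mem_filter andbC.
Qed.

Lemma eq_big_codom_vanishing (V : nmodType) (T : eqType) (I J : finType)
    (f : I -> T) (g : J -> T) (F : T -> V) :
  injective f -> injective g ->
  (forall x, x \in codom f -> x \notin codom g -> F x = 0) ->
  (forall x, x \in codom g -> x \notin codom f -> F x = 0) ->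
  \sum_i F (f i) = \sum_j F (g j).
Proof.
move=> inj_f inj_g Ff Fg.
rewrite -!big_image /=; apply: eq_big_uniq_vanishing => //.
all: by rewrite map_inj_uniq // enum_uniq.
Qed.

Lemma ffun_neq_exists (I : finType) (T : eqType) (f g : {ffun I -> T}) :
  f != g -> exists i, f i != g i.
Proof.
move=> neq_fg; apply/existsP; apply: contraNT neq_fg => /existsPn eq_fg.
by apply/eqP/ffunP => i; apply/eqP/negPn/eq_fg.
Qed.

Lemma prodD1 (T : comPzSemiRingType) l (j : 'I_l) (F : 'I_l -> T) :
  \prod_(i < l) F i = F j * \prod_(i < l | i != j) F i.
Proof. by rewrite (bigD1 j). Qed.

Section Derivatives.
Variable n : nat.
Implicit Types (m b : 'X_{1..n}) (p : {mpoly R[n]}).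

Lemma mderivmX_eq0 m b : ~~ (m <= b)%MM -> ('X_[b] : {mpoly R[n]})^`M[m] = 0.
Proof.
move=> not_mb; have [i lt_bm] : exists i, (b i < m i)%N.
  apply/existsP; apply: contraNT not_mb => /existsPn ge_bm.
  by apply/mnm_lepP => i; rewrite leqNgt; apply: ge_bm.
by rewrite mderivmX (bigD1 i) //= ffact_small // mul0n scale0r.
Qed.

Lemma mderivm_eq0 m p : (msize p <= mdeg m)%N -> p^`M[m] = 0.
Proof.
move=> size_le; rewrite [p]mpolyE raddf_sum /=; apply: big1_seq => b /andP[_ b_supp].
rewrite linearZ /= mderivmX_eq0 ?scaler0 //; apply/negP => le_mb.
have := leq_trans (msize_mdeg_lt b_supp) size_le.
by rewrite -(submK le_mb) mdegD ltnNge leq_addl.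
Qed.

End Derivatives.

Section ProductWithPolynomial.
Variable n : nat.
Implicit Types (a b : A n) (q r : P n).

Lemma mulAP0l q : mulAP 0 q = 0.
Proof. by apply/ffunP => o; rewrite !ffunE mul0r. Qed.

Lemma mulAP0r a : mulAP a 0 = 0.
Proof. by apply/ffunP => o; rewrite !ffunE mulr0. Qed.

Lemma mulAP1r a : mulAP a 1 = a.
Proof. by apply/ffunP => o; rewrite !ffunE mulr1. Qed.

Lemma mulAPDl a b q : mulAP (a + b) q = mulAP a q + mulAP b q.
Proof. by apply/ffunP => o; rewrite !ffunE mulrDl. Qed.

Lemma mulAPDr a q r : mulAP a (q + r) = mulAP a q + mulAP a r.
Proof. by apply/ffunP => o; rewrite !ffunE mulrDr. Qed.

Lemma mulAPZl k a q : mulAP (k *: a) q = k *: mulAP a q.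
Proof. by apply/ffunP => o; rewrite !ffunE -scalerAl. Qed.

Lemma mulAPZr k a q : mulAP a (k *: q) = k *: mulAP a q.
Proof. by apply/ffunP => o; rewrite !ffunE scalerAr. Qed.

Lemma mulAP_suml (I : Type) (r : seq I) (Q : pred I) (F : I -> A n) q :
  mulAP (\sum_(i <- r | Q i) F i) q = \sum_(i <- r | Q i) mulAP (F i) q.
Proof. exact: (big_morph (fun a => mulAP a q) (fun a b => mulAPDl a b q) (mulAP0l q)). Qed.

Lemma mulAP_sumr (I : Type) (r : seq I) (Q : pred I) (F : I -> P n) a :
  mulAP a (\sum_(i <- r | Q i) F i) = \sum_(i <- r | Q i) mulAP a (F i).
Proof. exact: (big_morph (mulAP a) (mulAPDr a) (mulAP0r a)). Qed.

End ProductWithPolynomial.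

Section BoundedMonomials.
Variables n l : nat.

Definition bmons N (al : {ffun 'I_l -> 'X_{1..n < N}}) : Mon n l :=
  [ffun j => bmnm (al j)].

Definition in_box N (m : Mon n l) : bool := [forall j, mdeg (m j) < N]%N.

Lemma bmons_inj N : injective (@bmons N).
Proof.
move=> al al' /ffunP eq_al; apply/ffunP => j; apply/val_inj.
by have := eq_al j; rewrite !ffunE.
Qed.

Lemma codom_bmons N m : (m \in codom (@bmons N)) = in_box N m.
Proof.
apply/codomP/forallP => [[al ->] j|in_N]; first by rewrite ffunE bmdeg.
by exists [ffun j => BMultinom (in_N j)]; apply/ffunP => j; rewrite !ffunE.
Qed.

Lemma sum_bmons_vanishing (V : nmodType) K N (G : Mon n l -> V) : (K <= N)%N ->
  (forall m, ~~ in_box K m -> G m = 0) ->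
  \sum_(al : {ffun 'I_l -> 'X_{1..n < N}}) G (bmons al)
  = \sum_(al : {ffun 'I_l -> 'X_{1..n < K}}) G (bmons al).
Proof.
move=> le_KN G0; apply: eq_big_codom_vanishing; try exact: bmons_inj.
  by move=> m _; rewrite codom_bmons; apply: G0.
move=> m; rewrite !codom_bmons => /forallP in_K /negP[].
by apply/forallP => j; apply: leq_trans (in_K j) le_KN.
Qed.

End BoundedMonomials.

Lemma sum_bmnm_vanishing (V : nmodType) n K N (G : 'X_{1..n} -> V) : (K <= N)%N ->
  (forall m, (K <= mdeg m)%N -> G m = 0) ->
  \sum_(b : 'X_{1..n < N}) G b = \sum_(b : 'X_{1..n < K}) G b.
Proof.
have codom_bmnm k m : (m \in codom (@bmnm n k)) = (mdeg m < k)%N.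
  by apply/codomP/idP => [[b ->]|lt_mk]; [exact: bmdeg | exists (BMultinom lt_mk)].
move=> le_KN G0; apply: eq_big_codom_vanishing; try exact: val_inj.
  by move=> m _; rewrite codom_bmnm -leqNgt; apply: G0.
by move=> m; rewrite !codom_bmnm => lt_mK /negP[]; apply: leq_trans lt_mK le_KN.
Qed.

Section SigmaTruncated.
Variables n l : nat.
Implicit Types (c : Bhat n l) (xs : {ffun 'I_l -> A n}) (s : Pat n l) (m : Mon n l).

Definition Sigma_term c xs s m : A n :=
  mulAP (c s m) (\prod_(j < l) (xs j (s j))^`M[m j]).

Definition Sigma_box N c xs : A n :=
  \sum_s \sum_(al : {ffun 'I_l -> 'X_{1..n < N}}) Sigma_term c xs s (bmons al).

Lemma msize_le_bound xs j o : (msize (xs j o) <= bound xs)%N.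
Proof. by apply: leq_trans (leq_bigmax j); rewrite (bigD1 o) //= leq_maxl. Qed.

Lemma Sigma_term_out_box c xs s m : ~~ in_box (bound xs) m -> Sigma_term c xs s m = 0.
Proof.
rewrite negb_forall => /existsP[j]; rewrite -leqNgt => bound_le.
rewrite /Sigma_term (bigD1 j) //= mderivm_eq0 ?mul0r ?mulAP0r //.
exact: leq_trans (msize_le_bound _ _ _) bound_le.
Qed.

Lemma Sigma_boxE N c xs : (bound xs <= N)%N -> Sigma c xs = Sigma_box N c xs.
Proof.
move=> le_bound; apply: eq_bigr => s _.
rewrite (@sum_bmons_vanishing _ _ _ (bound xs) N) //; last exact: Sigma_term_out_box.
by apply: eq_bigr => al _; congr mulAP; apply: eq_bigr => j _; rewrite ffunE.
Qed.

Lemma Sigma_elemB a (phis : 'I_l -> Bel n) xs :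
  Sigma (elemB a phis) xs = mulAP a (\prod_(j < l) sigma (phis j) (xs j)).
Proof.
pose N := bound xs.
have sigma_N j : sigma (phis j) (xs j)
    = \sum_(o : option 'I_n) \sum_(b : 'X_{1..n < N}) phis j o b *: (xs j o)^`M[b].
  apply: eq_bigr => o _; rewrite [RHS](@sum_bmnm_vanishing _ _ (msize (xs j o)) N
    (fun b => phis j o b *: (xs j o)^`M[b])) ?msize_le_bound //.
  by move=> b size_le; rewrite mderivm_eq0 ?scaler0.
rewrite (eq_bigr _ (fun j _ => sigma_N j)) bigA_distr_bigA (Sigma_boxE _ (leqnn N)).
rewrite mulAP_sumr; apply: eq_bigr => s _.
rewrite bigA_distr_bigA mulAP_sumr; apply: eq_bigr => al _.
rewrite /Sigma_term /elemB mulAPZl scaler_prod mulAPZr.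
by congr (_ *: mulAP _ _); apply: eq_bigr => j _; rewrite ffunE.
Qed.

Lemma Sigma_linear k c c' xs :
  Sigma (fun s m => k *: c s m + c' s m) xs = k *: Sigma c xs + Sigma c' xs.
Proof.
rewrite !(Sigma_boxE _ (leqnn (bound xs))) scaler_sumr -big_split.
apply: eq_bigr => s _; rewrite scaler_sumr -big_split; apply: eq_bigr => al _.
by rewrite /Sigma_term mulAPDl mulAPZl.
Qed.

Lemma Sigma_term_updA c xs j k x y s m :
  Sigma_term c (updA xs j (k *: x + y)) s m
  = k *: Sigma_term c (updA xs j x) s m + Sigma_term c (updA xs j y) s m.
Proof.
have others z : \prod_(i < l | i != j) ((updA xs j z) i (s i))^`M[m i]
              = \prod_(i < l | i != j) (xs i (s i))^`M[m i].
  by apply: eq_bigr => i /negbTE neq_ij; rewrite ffunE neq_ij.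
rewrite /Sigma_term !(prodD1 j) !others !ffunE eqxx !ffunE.
by rewrite mderivmD mderivmZ mulrDl -scalerAl mulAPDr mulAPZr.
Qed.

Lemma Sigma_multilinear c : multilinear (Sigma c).
Proof.
move=> xs j k x y; set xs_kxy := updA xs j _; set xs_x := updA xs j x; set xs_y := updA xs j y.
pose N := maxn (bound xs_kxy) (maxn (bound xs_x) (bound xs_y)).
rewrite !(@Sigma_boxE N) ?leq_max ?leqnn ?orbT //.
rewrite /Sigma_box scaler_sumr -big_split; apply: eq_bigr => s _.
rewrite scaler_sumr -big_split; apply: eq_bigr => al _.
exact: Sigma_term_updA.
Qed.

End SigmaTruncated.

Section BasisTuples.
Variables n l : nat.
Implicit Types (c : Bhat n l) (s : Pat n l) (m be : Mon n l).

Definition basisA (o : option 'I_n) (b : 'X_{1..n}) : A n :=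
  [ffun o' => if o' == o then 'X_[b] else 0].

Definition basis_tuple s be : {ffun 'I_l -> A n} := [ffun j => basisA (s j) (be j)].

Definition tdeg m : nat := (\sum_(j < l) mdeg (m j))%N.

Definition mfact be : nat := (\prod_(j < l) \prod_(i < n) (be j i)`!)%N.

Definition derivX be m : P n := \prod_(j < l) ('X_[be j])^`M[m j].

Definition lower_terms c s be : A n :=
  \sum_(al : {ffun 'I_l -> 'X_{1..n < bound (basis_tuple s be)}} | bmons al != be)
     mulAP (c s (bmons al)) (derivX be (bmons al)).

Lemma derivX_diag be : derivX be be = (mfact be)%:R *: 1.
Proof.
rewrite /derivX /mfact (eq_bigr (fun j => (\prod_(i < n) (be j i)`!)%N%:R *: (1 : P n))).
  by rewrite scaler_prod big1_eq natr_prod.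
move=> j _; rewrite mderivmX (_ : (be j - be j)%MM = 0%MM) ?mpolyX0; last first.
  by apply/mnmP => i; rewrite mnmBE mnm0E subnn.
by congr (_%:R *: _); apply: eq_bigr => i _; rewrite ffactnn.
Qed.

Lemma mfact_neq0 be : (mfact be)%:R != 0 :> R.
Proof.
rewrite Num.Theory.pnatr_eq0 -lt0n prodn_gt0 // => j.
by rewrite prodn_gt0 // => i; rewrite fact_gt0.
Qed.

Lemma tdeg_lt_derivX be m : derivX be m != 0 -> m != be -> (tdeg m < tdeg be)%N.
Proof.
move=> derivX_neq0 /ffun_neq_exists[j neq_j].
have le_m j' : (m j' <= be j')%MM.
  apply: contraNT derivX_neq0 => not_le.
  by rewrite /derivX (prodD1 j') mderivmX_eq0 ?mul0r.
have lt_j : (mdeg (m j) < mdeg (be j))%N.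
  rewrite -(submK (le_m j)) mdegD -[X in (X < _)%N]add0n ltn_add2r lt0n mdeg_eq0.
  by apply: contraNneq neq_j => eq0; rewrite -(submK (le_m j)) eq0 add0m.
rewrite /tdeg (bigD1 j) // [X in (_ < X)%N](bigD1 j) //= -addSn leq_add //.
by apply: leq_sum => j' _; rewrite -(submK (le_m j')) mdegD leq_addl.
Qed.

Lemma mdeg_lt_bound_basis_tuple s be j : (mdeg (be j) < bound (basis_tuple s be))%N.
Proof. by have := msize_le_bound (basis_tuple s be) j (s j); rewrite !ffunE eqxx msizeX. Qed.

Lemma Sigma_basis_tuple c s be :
  Sigma c (basis_tuple s be) = (mfact be)%:R *: c s be + lower_terms c s be.
Proof.
pose be_box : {ffun 'I_l -> 'X_{1..n < bound (basis_tuple s be)}} :=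
  [ffun j => BMultinom (mdeg_lt_bound_basis_tuple s be j)].
have bmons_be : bmons be_box = be by apply/ffunP => j; rewrite !ffunE.
rewrite (Sigma_boxE _ (leqnn _)) /Sigma_box (bigD1 s) //=.
rewrite [X in _ + X]big1 ?addr0 => [|s' neq_s']; last first.
  have [j neq_j] := ffun_neq_exists neq_s'.
  apply: big1 => al _; rewrite /Sigma_term (prodD1 j) !ffunE (negbTE neq_j).
  by rewrite mderivm_eq0 ?msize0 // mul0r mulAP0r.
rewrite (bigD1 be_box) //= /Sigma_term bmons_be.
have -> : \prod_(j < l) (basis_tuple s be j (s j))^`M[be j] = derivX be be.
  by apply: eq_bigr => j _; rewrite !ffunE eqxx.
rewrite derivX_diag mulAPZr mulAP1r; congr (_ + _).
apply: eq_big => [al|al _]; first by rewrite -(inj_eq (@bmons_inj _ _ _)) bmons_be.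
by congr mulAP; apply: eq_bigr => j _; rewrite !ffunE eqxx.
Qed.

Lemma eq_lower_terms c c' s be :
  (forall m, (tdeg m < tdeg be)%N -> c s m = c' s m) ->
  lower_terms c s be = lower_terms c' s be.
Proof.
move=> eq_below; apply: eq_bigr => al neq_be.
have [->|derivX_neq0] := eqVneq (derivX be (bmons al)) 0; first by rewrite !mulAP0r.
by rewrite eq_below // tdeg_lt_derivX.
Qed.

Lemma Sigma_eq0 c : (forall xs, Sigma c xs = 0) -> forall s m, c s m = 0.
Proof.
move=> Sigma0 s m; have [k] := ubnP (tdeg m); elim: k m => // k IH m lt_mk.
have := Sigma0 (basis_tuple s m); rewrite Sigma_basis_tuple.
rewrite (@eq_lower_terms _ (fun _ _ => 0)) => [|m' lt_m']; last first.
  by apply: IH; apply: leq_trans lt_m' _.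
rewrite /lower_terms big1 ?addr0 => [|al _]; last exact: mulAP0l.
by move/eqP; rewrite scaler_eq0 (negbTE (mfact_neq0 m)) => /eqP.
Qed.

Lemma Sigma_inj c c' : (forall xs, Sigma c xs = Sigma c' xs) ->
  forall s m, c s m = c' s m.
Proof.
move=> eq_Sigma s m; apply/eqP; rewrite -subr_eq0 addrC -scaleN1r; apply/eqP.
apply: (Sigma_eq0 (c := fun s m => (-1) *: c' s m + c s m)) => xs.
by rewrite Sigma_linear eq_Sigma scaleN1r addNr.
Qed.

End BasisTuples.

Lemma basisA_decomposition n (x : A n) :
  x = \sum_(o : option 'I_n) \sum_(b <- msupp (x o)) (x o)@_b *: basisA o b.
Proof.
apply/ffunP => o; rewrite sum_ffunE (bigD1 o) //= [X in _ + X]big1 ?addr0.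
  by rewrite sum_ffunE {1}[x o]mpolyE; apply: eq_bigr => b _; rewrite !ffunE eqxx.
move=> o' neq_o'; rewrite sum_ffunE big1 // => b _.
by rewrite !ffunE eq_sym (negbTE neq_o') scaler0.
Qed.

Section MultilinearMaps.
Variables n l : nat.
Variable D : Cl n l.
Hypothesis D_multilinear : multilinear D.

Lemma multilinear_updA0 xs j : D (updA xs j 0) = 0.
Proof.
have := D_multilinear xs j 1 0 0; rewrite scaler0 addr0 scale1r.
by move/(congr1 (fun z => z - D (updA xs j 0))); rewrite addrK subrr.
Qed.

Lemma multilinear_updAZ xs j k x : D (updA xs j (k *: x)) = k *: D (updA xs j x).
Proof. by have := D_multilinear xs j k x 0; rewrite !addr0 multilinear_updA0 addr0. Qed.

Lemma multilinear_updA_sum xs j (I : Type) (r : seq I) (Q : pred I) (F : I -> A n) :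
  D (updA xs j (\sum_(i <- r | Q i) F i)) = \sum_(i <- r | Q i) D (updA xs j (F i)).
Proof.
have additive x y : D (updA xs j (x + y)) = D (updA xs j x) + D (updA xs j y).
  by have := D_multilinear xs j 1 x y; rewrite !scale1r.
exact: (big_morph (fun x => D (updA xs j x)) additive (multilinear_updA0 xs j)).
Qed.

Definition is_basisA (x : A n) : Prop := exists o b, x = basisA o b.

Lemma multilinear_eq0 :
  (forall s be, D (basis_tuple s be) = 0) -> forall xs, D xs = 0.
Proof.
move=> D0 xs; suff D0_from k (ys : {ffun 'I_l -> A n}) :
    (forall j : 'I_l, (k <= j)%N -> is_basisA (ys j)) -> D ys = 0.
  by apply: (D0_from l) => j; rewrite leqNgt ltn_ord.
elim: k ys => [|k IH] ys ys_basis.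
  have ys_j j : exists ob : option 'I_n * 'X_{1..n}, ys j = basisA ob.1 ob.2.
    by have [o [b ->]] := ys_basis j (leq0n j); exists (o, b).
  have [sb sbP] := fin_all_exists ys_j.
  suff -> : ys = basis_tuple [ffun j => (sb j).1] [ffun j => (sb j).2] by apply: D0.
  by apply/ffunP => j; rewrite !ffunE sbP.
have [lt_kl|le_lk] := ltnP k l; last first.
  by apply: IH => j le_kj; have := ltn_ord j; rewrite ltnNge (leq_trans le_lk le_kj).
pose jk := Ordinal lt_kl.
have -> : ys = updA ys jk (ys jk) by apply/ffunP => j; rewrite ffunE; case: eqP => // ->.
rewrite (basisA_decomposition (ys jk)) multilinear_updA_sum; apply: big1 => o _.
rewrite multilinear_updA_sum; apply: big1 => b _.
rewrite multilinear_updAZ IH ?scaler0 // => j le_kj; rewrite ffunE.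
case: eqP => [_|/eqP neq_j]; first by exists o, b.
apply: ys_basis; rewrite ltn_neqAle le_kj andbT.
by apply: contraNneq neq_j => eq_kj; apply/eqP/val_inj.
Qed.

End MultilinearMaps.

Section Surjectivity.
Variables n l : nat.
Variable f : Cl n l.
Hypothesis f_multilinear : multilinear f.
Implicit Types (s : Pat n l) (be : Mon n l).

(* Back-substitution in the triangular system of [Sigma_basis_tuple]; the fuel
   [k] is enough as soon as [k > tdeg be]. *)
Fixpoint Sigma_inv_rec (k : nat) : Bhat n l :=
  if k is k'.+1 then fun s be =>
    (mfact be)%:R^-1 *: (f (basis_tuple s be) - lower_terms (Sigma_inv_rec k') s be)
  else fun _ _ => 0.

Definition Sigma_inv : Bhat n l := fun s be => Sigma_inv_rec (tdeg be).+1 s be.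

Lemma Sigma_inv_recE k s be : (tdeg be < k)%N -> Sigma_inv_rec k s be = Sigma_inv s be.
Proof.
have [N] := ubnP (tdeg be); elim: N k be => // N IH [|k] be lt_beN // lt_bek.
rewrite /Sigma_inv /=; congr (_ *: (_ - _)).
by rewrite !(@eq_lower_terms _ _ _ Sigma_inv) // => m lt_m; apply: IH;
  apply: leq_trans lt_m _.
Qed.

Lemma Sigma_invE s be : Sigma_inv s be =
  (mfact be)%:R^-1 *: (f (basis_tuple s be) - lower_terms Sigma_inv s be).
Proof.
rewrite {1}/Sigma_inv /=; congr (_ *: (_ - _)).
by apply: eq_lower_terms => m; apply: Sigma_inv_recE.
Qed.

Lemma Sigma_inv_basis_tuple s be : Sigma Sigma_inv (basis_tuple s be) = f (basis_tuple s be).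
Proof.
by rewrite Sigma_basis_tuple {1}Sigma_invE scalerA mulfV ?mfact_neq0 // scale1r subrK.
Qed.

Lemma Sigma_invK xs : Sigma Sigma_inv xs = f xs.
Proof.
apply/eqP; rewrite -subr_eq0; apply/eqP; move: xs.
apply: (@multilinear_eq0 _ _ (fun xs => Sigma Sigma_inv xs - f xs)) => [xs j k x y|s be].
  by rewrite Sigma_multilinear f_multilinear scalerBr addrACA opprD addrA.
by rewrite Sigma_inv_basis_tuple subrr.
Qed.

End Surjectivity.

Section ChainMap.
Variables n l : nat.
Implicit Types (c : Bhat n l) (xs : {ffun 'I_l -> A n}) (s : Pat n l) (m : Mon n l)
  (p : Pat n l * Mon n l).

Definition koszul_d xs (j : 'I_l) : {ffun 'I_l -> A n} :=
  [ffun k : 'I_l => if (k < j)%N then twistA (xs k) else if k == j then dA (xs k) else xs k].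

(* A pair p = (s, m) indexes a coefficient of the completion; [shift j i]
   is the reindexing done by partial_l: the factor p_i of a phi^0-entry in
   slot j becomes the zeta_i-entry. *)
Definition shift (j : 'I_l) (i : 'I_n) p : Pat n l * Mon n l :=
  (updP p.1 j (Some i), updM p.2 j (p.2 j - U_(i))%MM).

Definition unshift (j : 'I_l) (i : 'I_n) p : Pat n l * Mon n l :=
  (updP p.1 j None, updM p.2 j (p.2 j + U_(i))%MM).

Definition shiftable (j : 'I_l) (i : 'I_n) p : bool :=
  (p.1 j == None) && (U_(i) <= p.2 j)%MM.

Definition d_term c xs j i p : A n :=
  if p.1 j == Some i then
    ksign p.1 j *: mulAP (c p.1 p.2)
      ((xs j None)^`M(i)^`M[p.2 j] * \prod_(k < l | k != j) (xs k (p.1 k))^`M[p.2 k])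
  else 0.

Definition partial_term c xs j i p : A n :=
  if shiftable j i p then
    ksign p.1 j *: mulAP (c (shift j i p).1 (shift j i p).2)
      (\prod_(k < l) (xs k (p.1 k))^`M[p.2 k])
  else 0.

Lemma ksign_updP s j o : ksign (updP s j o) j = ksign s j.
Proof. by apply: eq_bigr => k lt_kj; rewrite ffunE -val_eqE (ltn_eqF lt_kj). Qed.

Lemma shiftK j i p : p.1 j = None -> (U_(i) <= p.2 j)%MM -> unshift j i (shift j i p) = p.
Proof.
case: p => s m /= s_j le_U; congr (_, _); apply/ffunP => k; rewrite !ffunE;
  by case: eqP => [->|]; rewrite ?s_j ?eqxx ?submK.
Qed.

Lemma unshiftK j i p : p.1 j = Some i -> shift j i (unshift j i p) = p.
Proof.
case: p => s m /= s_j; congr (_, _); apply/ffunP => k; rewrite !ffunE;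
  by case: eqP => [->|]; rewrite ?s_j ?eqxx ?addmK.
Qed.

Lemma prod_koszul_d xs j s m :
  \prod_(k < l | k != j) (koszul_d xs j k (s k))^`M[m k]
  = ksign s j *: \prod_(k < l | k != j) (xs k (s k))^`M[m k].
Proof.
have ksignE : ksign s j
    = \prod_(k < l | k != j) (if (k < j)%N && (s k == None) then -1 else 1).
  rewrite /ksign big_mkcond [RHS]big_mkcond; apply: eq_bigr => k _.
  have [lt_kj|_] := ltnP k j; last by case: (k != j).
  by rewrite -val_eqE (ltn_eqF lt_kj) /=; case: (s k).
rewrite ksignE -scaler_prod; apply: eq_bigr => k neq_kj; rewrite ffunE (negbTE neq_kj).
case: ifP => _ /=; last by rewrite scale1r.
by rewrite ffunE; case: (s k) => [o|]; rewrite ?scale1r // mderivmN scaleN1r.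
Qed.

Lemma Sigma_term_koszul_d c xs j p :
  Sigma_term c (koszul_d xs j) p.1 p.2 = \sum_(i < n) d_term c xs j i p.
Proof.
case: p => s m; rewrite /Sigma_term (prodD1 j) prod_koszul_d !ffunE ltnn eqxx /dA ffunE.
case s_j: (s j) => [i0|]; last first.
  by rewrite mderivm_eq0 ?msize0 // mul0r mulAP0r big1 // => i _; rewrite /d_term /= s_j.
rewrite (bigD1 i0) //= [X in _ + X]big1 ?addr0 => [|i neq_i]; last first.
  by rewrite /d_term /= s_j; case: eqP => // [[eq_i]]; rewrite eq_i eqxx in neq_i.
by rewrite /d_term /= s_j eqxx -scalerAr mulAPZr.
Qed.

Lemma Sigma_term_partial c xs p :
  Sigma_term (partial_l c) xs p.1 p.2 = \sum_(j < l) \sum_(i < n) partial_term c xs j i p.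
Proof.
case: p => s m; rewrite /Sigma_term /partial_l mulAP_suml big_mkcond; apply: eq_bigr => j _ /=.
case s_j : (s j == None); last first.
  by rewrite big1 // => i _; rewrite /partial_term /shiftable /= s_j.
rewrite mulAP_suml; apply: eq_bigr => i _.
by rewrite /partial_term /shiftable /= s_j; case: ifP; rewrite ?mulAPZl ?mulAP0l.
Qed.

Lemma partial_term_shift c xs j i p : shiftable j i p ->
  partial_term c xs j i p = d_term c xs j i (shift j i p).
Proof.
case: p => s m /andP[/eqP /= s_j le_U].
rewrite /partial_term /d_term /shiftable /= s_j le_U !ffunE !eqxx /=.
rewrite ksign_updP; congr (_ *: mulAP _ _); rewrite (prodD1 j) s_j; congr (_ * _).
  by rewrite -mderivmU1m -mderivmDm addmC submK.
by apply: eq_bigr => k neq_kj; rewrite !ffunE (negbTE neq_kj).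
Qed.

Lemma d_term_eq0 c xs j i p : (bound xs <= mdeg (p.2 j + U_(i)))%N -> d_term c xs j i p = 0.
Proof.
move=> bound_le; rewrite /d_term; case: ifP => // _.
rewrite -mderivmU1m -mderivmDm addmC mderivm_eq0 ?mul0r ?mulAP0r ?scaler0 //.
exact: leq_trans (msize_le_bound xs j None) bound_le.
Qed.

Definition pairs N : seq (Pat n l * Mon n l) :=
  [seq (s, bmons al) | s <- index_enum (Pat n l),
                       al <- index_enum {ffun 'I_l -> 'X_{1..n < N}}].

Lemma mem_pairs N p : (p \in pairs N) = in_box N p.2.
Proof.
case: p => s m /=; rewrite -codom_bmons; apply/allpairsPdep/codomP.
  by move=> [s' [al [_ _ [_ ->]]]]; exists al.
by move=> [al ->]; exists s, al; rewrite !mem_index_enum.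
Qed.

Lemma Sigma_box_pairs N c xs :
  Sigma_box N c xs = \sum_(p <- pairs N) Sigma_term c xs p.1 p.2.
Proof. by rewrite /Sigma_box big_allpairs_dep. Qed.

Lemma uniq_pairs N : uniq (pairs N).
Proof.
apply: allpairs_uniq_dep; rewrite ?index_enum_uniq //.
by move=> [s al] [s' al'] _ _ /= [-> /bmons_inj ->].
Qed.

Lemma mem_shift_pairs N j i p :
  (p \in map (shift j i) (filter (shiftable j i) (pairs N)))
  = (p.1 j == Some i) && in_box N (unshift j i p).2.
Proof.
apply/mapP/andP => [[q] | [/eqP p_j in_N]].
  rewrite mem_filter mem_pairs => /andP[/andP[/eqP q_j le_U] in_N] ->.
  by rewrite shiftK // !ffunE eqxx.
exists (unshift j i p); last by rewrite unshiftK.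
by rewrite mem_filter mem_pairs in_N /shiftable /= !ffunE !eqxx lem_addl.
Qed.

Lemma sum_d_term_partial_term c xs j i N : (bound xs < N)%N ->
  \sum_(p <- pairs N) d_term c xs j i p = \sum_(p <- pairs N) partial_term c xs j i p.
Proof.
move=> lt_bound_N.
rewrite [RHS](bigID (shiftable j i)) /=.
rewrite [X in _ + X]big1 ?addr0 => [|p /negbTE not_shiftable]; last first.
  by rewrite /partial_term not_shiftable.
rewrite -[RHS]big_filter [RHS](eq_big_seq (d_term c xs j i \o shift j i)) => [|p]; last first.
  by rewrite mem_filter => /andP[shiftable_p _]; apply: partial_term_shift.
rewrite -(big_map (shift j i) xpredT); apply: eq_big_uniq_vanishing.
- exact: uniq_pairs.
- rewrite map_inj_in_uniq ?filter_uniq ?uniq_pairs // => p q.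
  rewrite !mem_filter => /andP[/andP[/eqP p_j le_p] _] /andP[/andP[/eqP q_j le_q] _] eq_pq.
  by rewrite -(shiftK p_j le_p) -(shiftK q_j le_q) eq_pq.
- move=> p; rewrite mem_pairs mem_shift_pairs negb_and => in_N.
  case/orP => [/negbTE p_j | /forallPn[k]]; first by rewrite /d_term p_j.
  rewrite ffunE -leqNgt; case: eqP => _ le_N /=; last first.
    by rewrite leqNgt (forallP in_N k) in le_N.
  exact/d_term_eq0/(leq_trans (ltnW lt_bound_N)).
- move=> p; rewrite mem_pairs mem_shift_pairs => /andP[_ in_N] /negP[].
  apply/forallP => k; have := forallP in_N k; rewrite /= ffunE.
  by case: eqP => [->|//]; apply: leq_ltn_trans; rewrite mdegD leq_addr.
Qed.

Lemma Sigma_chain c xs : d_l (Sigma c) xs = Sigma (partial_l c) xs.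
Proof.
pose N := maxn (bound xs).+1 (\max_(j < l) bound (koszul_d xs j)).
have lt_bound_N : (bound xs < N)%N by rewrite leq_maxl.
have -> : d_l (Sigma c) xs = \sum_(j < l) Sigma_box N c (koszul_d xs j).
  apply: eq_bigr => j _; apply: Sigma_boxE.
  exact: leq_trans (leq_bigmax j) (leq_maxr _ _).
rewrite (Sigma_boxE _ (ltnW lt_bound_N)) Sigma_box_pairs.
under eq_bigr do rewrite Sigma_box_pairs; under [RHS]eq_bigr do rewrite Sigma_term_partial.
rewrite [RHS]exchange_big; apply: eq_bigr => j _.
rewrite [LHS](eq_bigr (fun p => \sum_(i < n) d_term c xs j i p)) => [|p _]; last first.
  exact: Sigma_term_koszul_d.
rewrite exchange_big [RHS]exchange_big; apply: eq_bigr => i _; exact: sum_d_term_partial_term.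
Qed.

End ChainMap.

Theorem proposition3 (n l : nat) (theta theta' : 'M[R]_n) :
  theta^T = - theta -> theta'^T = - theta' -> (1 <= l)%N ->
  (* Sigma on elementary tensors is the paper's formula *)
      (forall (a : A n) (phis : 'I_l -> Bel n) (xs : {ffun 'I_l -> A n}),
         Sigma (elemB a phis) xs = mulAP a (\prod_(j < l) sigma (phis j) (xs j))) /\
      (* Sigma lands in C^l *)
      (forall c : Bhat n l, multilinear (Sigma c)) /\
      (* Sigma is linear *)
      (forall (k : R) (c c' : Bhat n l) (xs : {ffun 'I_l -> A n}),
         Sigma (fun s al => k *: c s al + c' s al) xs
         = k *: Sigma c xs + Sigma c' xs) /\
      (* injective *)
      (forall c c' : Bhat n l, (forall xs, Sigma c xs = Sigma c' xs) ->
         forall s al, c s al = c' s al) /\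
      (* surjective onto C^l *)
      (forall f : Cl n l, multilinear f ->
         exists c : Bhat n l, forall xs, Sigma c xs = f xs) /\
      (* chain map: d_l Sigma = Sigma partial_l *)
      (forall (c : Bhat n l) xs, d_l (Sigma c) xs = Sigma (partial_l c) xs).
Proof.
(* Neither Sigma nor the differentials involve the products of A_theta and
   A_theta'. *)
move=> _ _ _; split; first exact: Sigma_elemB.
split; first exact: Sigma_multilinear.
split; first exact: Sigma_linear.
split; first exact: Sigma_inj.
split; first by move=> f f_multilinear; exists (Sigma_inv f); apply: Sigma_invK.
exact: Sigma_chain.
Qed.
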